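(* For $n>2$, there is no non-vanishing real exterior $3$-form on $\mathbb{C}^{n+1}=\mathbb{R}^{n+1}+i\mathbb{R}^{n+1}$ (viewed as a real vector space) invariant under the action of ${\sf SO}(1,n)$.
   Context: ${\sf SO}(1,n)$ is the special orthogonal group of the Lorentz form $-x_0^2+x_1^2+\dots+x_n^2$ on $\mathbb{R}^{n+1}$, acting on $\mathbb{C}^{n+1}=\mathbb{R}^{n+1}+i\mathbb{R}^{n+1}$ diagonally by $A(x+iy)=Ax+iAy$. *)

From HB Require Import structures.
From mathcomp Require Import all_boot all_order all_algebra.
From mathcomp Require Import reals.
Set Implicit Arguments. Unset Strict Implicit. Unset Printing Implicit Defensive.
Import Order.TTheory GRing.Theory Num.Theory.
Local Open Scope ring_scope.

(* C^(n+1) = R^(n+1) + i R^(n+1), viewed as a real vector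
   space, is represented by pairs (x, y) standing for x + i y. *)
Definition Cvec (R : realType) (n : nat) : Type := ('cV[R]_(n.+1) * 'cV[R]_(n.+1))%type.

Definition cadd (R : realType) (n : nat) (u v : Cvec R n) : Cvec R n :=
  (u.1 + v.1, u.2 + v.2).
Definition cscale (R : realType) (n : nat) (a : R) (u : Cvec R n) : Cvec R n :=
  (a *: u.1, a *: u.2).

Definition cact (R : realType) (n : nat) (A : 'M[R]_(n.+1)) (u : Cvec R n) : Cvec R n :=
  (A *m u.1, A *m u.2).

(* Gram matrix of the Lorentz form -x_0^2 + x_1^2 + ... + x_n^2. *)
Definition lorentzJ (R : realType) (n : nat) : 'M[R]_(n.+1) :=
  diag_mx (\row_(i < n.+1) (if i == ord0 then -1 else 1)).

Definition SO1n (R : realType) (n : nat) (A : 'M[R]_(n.+1)) : Prop :=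
  A^T *m lorentzJ R n *m A = lorentzJ R n /\ \det A = 1.

Definition trilinear (R : realType) (n : nat) (w : Cvec R n -> Cvec R n -> Cvec R n -> R) : Prop :=
  (forall a u u' v z, w (cadd (cscale a u) u') v z = a * w u v z + w u' v z) /\
  (forall a u v v' z, w u (cadd (cscale a v) v') z = a * w u v z + w u v' z) /\
  (forall a u v z z', w u v (cadd (cscale a z) z') = a * w u v z + w u v z').

Definition alternating (R : realType) (n : nat) (w : Cvec R n -> Cvec R n -> Cvec R n -> R) : Prop :=
  forall u v, w u u v = 0 /\ w u v u = 0 /\ w v u u = 0.

Definition ext3form (R : realType) (n : nat) (w : Cvec R n -> Cvec R n -> Cvec R n -> R) : Prop :=
  trilinear w /\ alternating w.

Definition SO1n_invariant (R : realType) (n : nat) (w : Cvec R n -> Cvec R n -> Cvec R n -> R) : Prop :=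
  forall A, SO1n A -> forall u v z, w (cact A u) (cact A v) (cact A z) = w u v z.

(* The diagonal matrices with entries +-1 and an even number of -1's lie in
   SO(1,n), and such a matrix acts on each coordinate piece (x_i e_i, y_i e_i)
   of a vector of C^(n+1) by a sign.  For three coordinate indices i, j, k,
   since n + 1 > 3 some index l is none of them, and flipping l together with
   an index m occurring an odd number of times among i, j, k multiplies
   w at the three coordinate pieces by -1; invariance forces that value to
   vanish, and trilinearity then gives w = 0. *)

From mathcomp Require Import all_boot all_order all_algebra.
From mathcomp Require Import reals.
From mathcomp Require Import lra.
Import Order.TTheory GRing.Theory Num.Theory.
Local Open Scope ring_scope.

Section CoordinatePieces.
Context {R : realType} {n : nat}.

Definition czero : Cvec R n := (0, 0).

Definition cproj (i : 'I_n.+1) (u : Cvec R n) : Cvec R n := cact (delta_mx i i) u.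

Lemma cscale1 (u : Cvec R n) : cscale 1 u = u.
Proof. by case: u => x y; rewrite /cscale /= !scale1r. Qed.

Lemma cadd0 (u : Cvec R n) : cadd u czero = u.
Proof. by case: u => x y; rewrite /cadd /= !addr0. Qed.

Lemma sum_delta_diag : \sum_(i < n.+1) delta_mx i i = 1%:M :> 'M[R]_n.+1.
Proof.
apply/matrixP => a b; rewrite summxE !mxE (bigD1 a) //= big1 ?addr0.
  by rewrite mxE eqxx eq_sym.
by move=> i /negbTE ia; rewrite mxE eq_sym ia.
Qed.

Lemma cvec_sum_cproj (u : Cvec R n) : u = \big[@cadd R n/czero]_i cproj i u.
Proof.
have sum1 (F : 'I_n.+1 -> Cvec R n) : (\big[@cadd R n/czero]_i F i).1 = \sum_i (F i).1.
  exact: (big_morph fst).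
have sum2 (F : 'I_n.+1 -> Cvec R n) : (\big[@cadd R n/czero]_i F i).2 = \sum_i (F i).2.
  exact: (big_morph snd).
case: u => x y; apply: injective_projections; rewrite ?sum1 ?sum2 /=;
  by rewrite -mulmx_suml sum_delta_diag mul1mx.
Qed.

Lemma cact_diag_cproj (d : 'rV[R]_n.+1) i (u : Cvec R n) :
  cact (diag_mx d) (cproj i u) = cscale (d 0 i) (cproj i u).
Proof.
have diag_delta : diag_mx d *m delta_mx i i = d 0 i *: delta_mx i i.
  apply/matrixP => a b; rewrite mul_diag_mx !mxE.
  by case: (eqVneq a i) => [->|_]; rewrite ?mulr0.
by rewrite /cact /cscale /cproj /= !mulmxA diag_delta !scalemxAl.
Qed.

End CoordinatePieces.

Section Trilinear.
Context {R : realType} {n : nat}.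
Variable w : Cvec R n -> Cvec R n -> Cvec R n -> R.
Hypothesis w_trilinear : trilinear w.

Lemma trilinearD1 u u' v z : w (cadd u u') v z = w u v z + w u' v z.
Proof. by have := w_trilinear.1 1 u u' v z; rewrite cscale1 mul1r. Qed.
Lemma trilinearD2 u v v' z : w u (cadd v v') z = w u v z + w u v' z.
Proof. by have := w_trilinear.2.1 1 u v v' z; rewrite cscale1 mul1r. Qed.
Lemma trilinearD3 u v z z' : w u v (cadd z z') = w u v z + w u v z'.
Proof. by have := w_trilinear.2.2 1 u v z z'; rewrite cscale1 mul1r. Qed.

Lemma trilinear0_1 v z : w czero v z = 0.
Proof. by have := trilinearD1 czero czero v z; rewrite cadd0; lra. Qed.
Lemma trilinear0_2 u z : w u czero z = 0.
Proof. by have := trilinearD2 u czero czero z; rewrite cadd0; lra. Qed.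
Lemma trilinear0_3 u v : w u v czero = 0.
Proof. by have := trilinearD3 u v czero czero; rewrite cadd0; lra. Qed.

Lemma trilinearZ a b c u v z :
  w (cscale a u) (cscale b v) (cscale c z) = a * b * c * w u v z.
Proof.
have Z1 a' u' v' z' : w (cscale a' u') v' z' = a' * w u' v' z'.
  by have := w_trilinear.1 a' u' czero v' z'; rewrite cadd0 trilinear0_1 addr0.
have Z2 a' u' v' z' : w u' (cscale a' v') z' = a' * w u' v' z'.
  by have := w_trilinear.2.1 a' u' v' czero z'; rewrite cadd0 trilinear0_2 addr0.
have Z3 a' u' v' z' : w u' v' (cscale a' z') = a' * w u' v' z'.
  by have := w_trilinear.2.2 a' u' v' z' czero; rewrite cadd0 trilinear0_3 addr0.
by rewrite Z1 Z2 Z3 !mulrA.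
Qed.

Lemma trilinear_cproj_eq0 u v z :
  (forall i j k, w (cproj i u) (cproj j v) (cproj k z) = 0) -> w u v z = 0.
Proof.
move=> w_pieces; rewrite (cvec_sum_cproj u) (cvec_sum_cproj v) (cvec_sum_cproj z).
rewrite (big_morph (fun x => w x _ _) (fun a b => trilinearD1 a b _ _) (trilinear0_1 _ _)).
rewrite big1 // => i _.
rewrite (big_morph (fun x => w _ x _) (fun a b => trilinearD2 _ a b _) (trilinear0_2 _ _)).
rewrite big1 // => j _.
by rewrite (big_morph (fun x => w _ _ x) (trilinearD3 _ _) (trilinear0_3 _ _)) big1.
Qed.

End Trilinear.

Section SignFlips.
Context {R : realType} {n : nat}.

Lemma SO1n_diag_sign (d : 'rV[R]_n.+1) :
  (forall i, d 0 i * d 0 i = 1) -> \prod_i d 0 i = 1 -> SO1n (diag_mx d).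
Proof.
move=> d_sq d_prod; split; last by rewrite det_diag.
rewrite tr_diag_mx /lorentzJ mul_diag_mx; apply/matrixP => a b.
rewrite mul_mx_diag !mxE; case: (eqVneq a b) => [<-|_]; last by rewrite !mulr0n !mulr0 mul0r.
by rewrite !mulr1n mulrAC d_sq mul1r.
Qed.

Definition flip2 (m l : 'I_n.+1) : 'rV[R]_n.+1 :=
  \row_t (if (t == m) || (t == l) then -1 else 1).

Lemma SO1n_flip2 {m l} : m != l -> SO1n (diag_mx (flip2 m l)).
Proof.
move=> ml; apply: SO1n_diag_sign => [i|].
  by rewrite mxE; case: ifP; rewrite ?mulrNN mulr1.
rewrite (bigD1 m) //= (bigD1 l) /=; last by rewrite eq_sym.
rewrite big1 => [|i /andP[im il]]; last by rewrite mxE (negbTE im) (negbTE il).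
by rewrite !mxE !eqxx orbT /= mulr1 mulrNN mulr1.
Qed.

Lemma flip2_odd (i j k : 'I_n.+1) : (3 < n.+1)%N ->
  exists m l, m != l /\ flip2 m l 0 i * flip2 m l 0 j * flip2 m l 0 k = -1.
Proof.
move=> n_gt3; have [l l_fresh|full] := pickP (fun l : 'I_n.+1 => l \notin [:: i; j; k]).
  move: l_fresh; rewrite !inE !negb_or => /and3P[il jl kl].
  pose m := if i == j then k else if i == k then j else i.
  exists m, l; split; first by rewrite /m; do 2?case: ifP => _; rewrite eq_sym.
  rewrite !mxE ![_ == l]eq_sym (negbTE il) (negbTE jl) (negbTE kl) !orbF /m.
  case: (eqVneq i j) => [<-|ij]; first by case: eqP => _; rewrite ?eqxx; lra.
  case: (eqVneq i k) => [<-|ik]; first by rewrite (negbTE ij) eqxx; lra.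
  by rewrite eqxx eq_sym (negbTE ij) eq_sym (negbTE ik); lra.
suff : (#|'I_n.+1| <= 3)%N by rewrite card_ord leqNgt n_gt3.
apply: leq_trans (card_size [:: i; j; k]); apply/subset_leq_card/subsetP => x _.
by have /negbFE := full x.
Qed.

End SignFlips.

Lemma SO1n_invariant_cproj_eq0 (R : realType) (n : nat) (hn : (2 < n)%N)
    (w : Cvec R n -> Cvec R n -> Cvec R n -> R) :
  trilinear w -> SO1n_invariant w ->
  forall i j k u v z, w (cproj i u) (cproj j v) (cproj k z) = 0.
Proof.
move=> w_tri w_inv i j k u v z.
have [m [l [ml odd_sign]]] := flip2_odd (R := R) i j k hn.
have := w_inv _ (SO1n_flip2 ml) (cproj i u) (cproj j v) (cproj k z).
by rewrite !cact_diag_cproj (trilinearZ _ w_tri) odd_sign; lra.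
Qed.

Theorem fact2p2 (R : realType) (n : nat) (hn : (2 < n)%N)
  (w : Cvec R n -> Cvec R n -> Cvec R n -> R) :
  ext3form w -> SO1n_invariant w ->
  ~ (exists u v z, w u v z != 0).
Proof.
move=> [w_tri _] w_inv [u [v [z /eqP]]]; apply.
apply: trilinear_cproj_eq0 => // i j k.
exact: SO1n_invariant_cproj_eq0.
Qed.
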